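(* Let $\pi$ be a uniformly random permutation of $\{1,\dots,n\}$ and $\mathbf{s}=\sqrt{12/(n^2-1)}\,\big(\pi(1)-\tfrac{n+1}2,\dots,\pi(n)-\tfrac{n+1}2\big)^\top$, and let $\boldsymbol{\Sigma}=\frac{n}{n-1}\big(\mathbf{I}_n-\frac1n\mathbf{1}_n\mathbf{1}_n^\top\big)$. Then for all non-random symmetric $n\times n$ matrices $\mathbf{A},\mathbf{B}$, $$\mathbb{E}\,\mathbf{s}^\top\mathbf{A}\mathbf{s}=\operatorname{tr}(\boldsymbol{\Sigma}\mathbf{A}),$$ $$\operatorname{cov}(\mathbf{s}^\top\mathbf{A}\mathbf{s},\mathbf{s}^\top\mathbf{B}\mathbf{s})=2\operatorname{tr}(\mathbf{A}\mathbf{B})-\frac65\operatorname{tr}(\mathbf{A}\circ\mathbf{B})-\frac{4}{5n}\operatorname{tr}(\mathbf{A})\operatorname{tr}(\mathbf{B})+O(1)\|\mathbf{A}\|\|\mathbf{B}\|,$$ where $O(1)$ denotes a quantity bounded in absolute value by a constant not depending on $n,\mathbf{A},\mathbf{B}$.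
   Context: $\circ$ denotes the Hadamard (entrywise) product, $\|\cdot\|$ the spectral norm, and $\mathbf{1}_n$ the all-ones vector. *)

From HB Require Import structures.
From mathcomp Require Import all_boot all_order all_algebra all_fingroup.
From mathcomp Require Import all_classical all_reals.
Set Implicit Arguments. Unset Strict Implicit. Unset Printing Implicit Defensive.
Import Order.TTheory GRing.Theory Num.Theory.
Local Open Scope ring_scope.

Section Defs.
Variable R : realType.

Definition Eperm (n : nat) (f : 'S_n -> R) : R :=
  (n`!%:R)^-1 * \sum_(p : 'S_n) f p.

Definition Covperm (n : nat) (f g : 'S_n -> R) : R :=
  Eperm (fun p => f p * g p) - Eperm f * Eperm g.

(* The vector s: permutation p of 'I_n represents pi(i+1) = (p i) + 1. *)
Definition svec (n : nat) (p : 'S_n) : 'cV[R]_n :=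
  \col_(i < n) (Num.sqrt (12 / (n%:R ^+ 2 - 1)) *
                ((p i)%:R + 1 - (n%:R + 1) / 2)).

Definition qform (n : nat) (A : 'M[R]_n) (x : 'cV[R]_n) : R :=
  ((x^T *m A *m x) 0 0).

Definition Sigma (n : nat) : 'M[R]_n :=
  (n%:R / (n%:R - 1)) *: (1%:M - n%:R^-1 *: const_mx 1).

Definition hadamard (m n : nat) (A B : 'M[R]_(m, n)) : 'M[R]_(m, n) :=
  \matrix_(i, j) (A i j * B i j).

Definition vnorm2 (n : nat) (x : 'cV[R]_n) : R :=
  Num.sqrt (\sum_i (x i 0) ^+ 2).

Definition specnorm (m n : nat) (A : 'M[R]_(m, n)) : R :=
  sup [set vnorm2 (A *m x) | x in [set x : 'cV[R]_n | vnorm2 x <= 1]].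

End Defs.

Arguments Eperm {R n} f.
Arguments Covperm {R n} f g.
Arguments svec {R n} p.
Arguments qform {R n} A x.
Arguments hadamard {R m n} A B.
Arguments vnorm2 {R n} x.
Arguments specnorm {R m n} A.
Arguments Sigma R n : clear implicits.

From HB Require Import structures.
From mathcomp Require Import all_boot all_order all_algebra all_fingroup.
From mathcomp Require Import all_classical all_reals.
From mathcomp Require Import ring lra.
Import Order.TTheory GRing.Theory Num.Theory.
Local Open Scope ring_scope.
Set Implicit Arguments. Unset Strict Implicit. Unset Printing Implicit Defensive.

(* The law of s is invariant under relabelling of the coordinates, and
   sum_i s_i = 0, sum_i s_i^2 = n.  Hence E[s_i s_j] only depends on whether
   i = j, and the two power sums force it to be Sigma_ij, which gives the mean.
   Likewise E[s_i s_j s_k s_l] only depends on the equality pattern of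
   (i, j, k, l): E[s_1^4] is a power sum of the centered ranks, and summing over
   one index with sum_l s_l = 0 and sum_l s_l^2 = n determines the other four.
   As sum_i s_i = 0, s^T A s does not change when A is replaced by its double
   centering A' (= P A P), whose rows and columns sum to zero.  Expanding the
   fourth moment in products of Kronecker deltas, every term with an index
   outside all deltas contracts to zero against A' and B', so that
     E[(s^T A' s)(s^T B' s)] = k22 (tr A' tr B' + 2 tr (A' B')) + k4 tr (A' o B')
   with k22 = 1 + O(1/n) and k4 = -6/5 + O(1/n).  Finally, trading A', B' for
   A, B costs O(||A|| ||B||), because every correction term is a bilinear form
   u^T A v with |u| |v| <= n. *)

Section PermExpectation.
Variables (R : realType) (n : nat).
Implicit Types (f g : 'S_n -> R) (c : R).

Lemma eq_Eperm f g : f =1 g -> Eperm f = Eperm g.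
Proof. by move=> fg; rewrite /Eperm (eq_bigr _ (fun p _ => fg p)). Qed.

Lemma Eperm_const c : Eperm (fun _ : 'S_n => c) = c.
Proof.
rewrite /Eperm sumr_const card_Sn -[c *+ _]mulr_natr mulrC mulfK //.
by rewrite pnatr_eq0 -lt0n fact_gt0.
Qed.

Lemma EpermZ c f : Eperm (fun p => c * f p) = c * Eperm f.
Proof. by rewrite /Eperm -mulr_sumr mulrCA. Qed.

Lemma Eperm_sum (I : finType) (F : I -> 'S_n -> R) :
  Eperm (fun p => \sum_i F i p) = \sum_i Eperm (F i).
Proof. by rewrite /Eperm exchange_big /= mulr_sumr. Qed.

Lemma Eperm_mulg (q : 'S_n) f : Eperm (fun p => f (q * p)%g) = Eperm f.
Proof. by rewrite /Eperm [in RHS](reindex_inj (mulgI q)). Qed.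

Lemma ler_norm_Eperm f c : (forall p, `|f p| <= c) -> `|Eperm f| <= c.
Proof.
move=> fc; have nfact_gt0 : (0 : R) < n`!%:R by rewrite ltr0n fact_gt0.
rewrite /Eperm normrM ger0_norm ?invr_ge0 ?ler0n // mulrC ler_pdivrMr //.
apply: le_trans (ler_norm_sum _ _ _) _.
by apply: le_trans (ler_sum _ (fun p _ => fc p)) _; rewrite sumr_const card_Sn mulr_natr.
Qed.

End PermExpectation.

Section PowerSums.
Variable R : numFieldType.
Implicit Types (m : nat) (h : R).

Lemma sum_shifted_nat m h :
  \sum_(i < m) (i%:R + h) = m%:R * (m%:R - 1) / 2 + m%:R * h.
Proof. by elim: m => [|m IH]; rewrite ?big_ord0 ?big_ord_recr /= ?IH -?natr1; field. Qed.

Lemma sum_shifted_nat_sqr m h :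
  \sum_(i < m) (i%:R + h) ^+ 2 =
    (m%:R - 1) * m%:R * (2 * m%:R - 1) / 6 + h * m%:R * (m%:R - 1) + m%:R * h ^+ 2.
Proof. by elim: m => [|m IH]; rewrite ?big_ord0 ?big_ord_recr /= ?IH -?natr1; field. Qed.

Lemma sum_shifted_nat_exp4 m h :
  \sum_(i < m) (i%:R + h) ^+ 4 =
    m%:R * (m%:R - 1) * (2 * m%:R - 1) * (3 * m%:R ^+ 2 - 3 * m%:R - 1) / 30
    + 4 * h * (m%:R * (m%:R - 1) / 2) ^+ 2
    + 6 * h ^+ 2 * ((m%:R - 1) * m%:R * (2 * m%:R - 1) / 6)
    + 4 * h ^+ 3 * (m%:R * (m%:R - 1) / 2) + m%:R * h ^+ 4.
Proof. by elim: m => [|m IH]; rewrite ?big_ord0 ?big_ord_recr /= ?IH -?natr1; field. Qed.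

Definition centered_rank (n a : nat) : R := a%:R + 1 - (n%:R + 1) / 2.

Lemma sum_centered_rank n : \sum_(a < n) centered_rank n a = 0.
Proof.
rewrite /centered_rank; under eq_bigr do rewrite -addrA.
by rewrite sum_shifted_nat; field.
Qed.

Lemma sum_centered_rank_sqr n :
  \sum_(a < n) centered_rank n a ^+ 2 = n%:R * (n%:R ^+ 2 - 1) / 12.
Proof.
rewrite /centered_rank; under eq_bigr do rewrite -addrA.
by rewrite sum_shifted_nat_sqr; field.
Qed.

Lemma sum_centered_rank_exp4 n :
  \sum_(a < n) centered_rank n a ^+ 4 = n%:R * (n%:R ^+ 2 - 1) * (3 * n%:R ^+ 2 - 7) / 240.
Proof.
rewrite /centered_rank; under eq_bigr do rewrite -addrA.
by rewrite sum_shifted_nat_exp4; field.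
Qed.

End PowerSums.

Section RankVector.
Variables (R : realType) (n : nat).
Hypothesis n_ge2 : (2 <= n)%N.
Implicit Types (p q : 'S_n) (i j k l : 'I_n).

Definition rank_scale : R := Num.sqrt (12 / (n%:R ^+ 2 - 1)).

Definition mu4 : R := 3 * (3 * n%:R ^+ 2 - 7) / (5 * (n%:R ^+ 2 - 1)).

Lemma svecE p i : svec p i 0 = rank_scale * centered_rank R n (p i).
Proof. by rewrite mxE. Qed.

Lemma svec_mulg q p i : svec (q * p)%g i 0 = svec p (q i) 0 :> R.
Proof. by rewrite !svecE permM. Qed.

Lemma sum_svec_map p (F : R -> R) :
  \sum_i F (svec p i 0) = \sum_(a < n) F (rank_scale * centered_rank R n a).
Proof.
rewrite [RHS](reindex_inj (@perm_inj _ p)).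
by apply: eq_bigr => i _; rewrite svecE.
Qed.

Lemma natr_sqr_sub1_gt0 : 0 < n%:R ^+ 2 - 1 :> R.
Proof.
have n2 : (2 : R) <= n%:R by rewrite ler_nat.
by nra.
Qed.

Lemma rank_scale_sqr : rank_scale ^+ 2 = 12 / (n%:R ^+ 2 - 1).
Proof. by rewrite sqr_sqrtr // divr_ge0 // ltW // natr_sqr_sub1_gt0. Qed.

Lemma sum_svec p : \sum_i svec p i 0 = 0 :> R.
Proof. by rewrite (sum_svec_map p id) -mulr_sumr sum_centered_rank mulr0. Qed.

Lemma sum_svec_sqr p : \sum_i svec p i 0 ^+ 2 = n%:R :> R.
Proof.
rewrite (sum_svec_map p (fun x => x ^+ 2)).
under eq_bigr do rewrite exprMn.
rewrite -mulr_sumr sum_centered_rank_sqr rank_scale_sqr.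
by field; rewrite gt_eqF ?natr_sqr_sub1_gt0.
Qed.

Lemma sum_svec_exp4 p : \sum_i svec p i 0 ^+ 4 = n%:R * mu4.
Proof.
rewrite (sum_svec_map p (fun x => x ^+ 4)).
under eq_bigr do rewrite exprMn.
rewrite -mulr_sumr sum_centered_rank_exp4 (exprM _ 2 2) rank_scale_sqr /mu4.
by field; rewrite gt_eqF ?natr_sqr_sub1_gt0.
Qed.

End RankVector.

Section Moments.
Variables (R : realType) (n : nat).
Hypothesis n_ge2 : (2 <= n)%N.
Implicit Types (q : 'S_n) (i j k l : 'I_n).

Definition mom2 i j : R := Eperm (fun p => svec p i 0 * svec p j 0).

Definition mom4 i j k l : R :=
  Eperm (fun p => svec p i 0 * svec p j 0 * svec p k 0 * svec p l 0).

Lemma mom2_perm q i j : mom2 (q i) (q j) = mom2 i j.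
Proof.
rewrite /mom2 -(Eperm_mulg q (fun p => svec p i 0 * svec p j 0)).
by apply: eq_Eperm => p; rewrite !svec_mulg.
Qed.

Lemma mom4_perm q i j k l : mom4 (q i) (q j) (q k) (q l) = mom4 i j k l.
Proof.
rewrite /mom4 -(Eperm_mulg q (fun p => svec p i 0 * svec p j 0 * svec p k 0 * svec p l 0)).
by apply: eq_Eperm => p; rewrite !svec_mulg.
Qed.

Lemma mom2C i j : mom2 i j = mom2 j i.
Proof. by apply: eq_Eperm => p; rewrite mulrC. Qed.

Lemma mom4C12 i j k l : mom4 i j k l = mom4 j i k l.
Proof. by apply: eq_Eperm => p; ring. Qed.

Lemma mom4C23 i j k l : mom4 i j k l = mom4 i k j l.
Proof. by apply: eq_Eperm => p; ring. Qed.

Lemma mom4C34 i j k l : mom4 i j k l = mom4 i j l k.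
Proof. by apply: eq_Eperm => p; ring. Qed.

Lemma sum_mom2 i : \sum_l mom2 i l = 0.
Proof.
rewrite /mom2 -Eperm_sum -[RHS](Eperm_const n); apply: eq_Eperm => p /=.
by rewrite -mulr_sumr sum_svec mulr0.
Qed.

Lemma sum_mom2_diag : \sum_l mom2 l l = n%:R.
Proof.
rewrite /mom2 -Eperm_sum -[RHS](Eperm_const n); apply: eq_Eperm => p /=.
by rewrite -(sum_svec_sqr R n_ge2 p); apply: eq_bigr => l _; rewrite expr2.
Qed.

Lemma sum_mom4 i j k : \sum_l mom4 i j k l = 0.
Proof.
rewrite /mom4 -Eperm_sum -[RHS](Eperm_const n); apply: eq_Eperm => p /=.
by rewrite -mulr_sumr sum_svec mulr0.
Qed.

Lemma sum_mom4_sqr i : \sum_l mom4 i i l l = n%:R * mom2 i i.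
Proof.
rewrite /mom4 /mom2 -Eperm_sum -EpermZ; apply: eq_Eperm => p /=.
by rewrite -(sum_svec_sqr R n_ge2 p) mulr_suml; apply: eq_bigr => l _; ring.
Qed.

Lemma sum_mom4_diag : \sum_l mom4 l l l l = n%:R * mu4 R n.
Proof.
rewrite /mom4 -Eperm_sum -[RHS](Eperm_const n); apply: eq_Eperm => p /=.
by rewrite -(sum_svec_exp4 R n_ge2 p); apply: eq_bigr => l _; ring.
Qed.

(* Relabelling invariance makes [f] constant off [s], so that constant is read
   off the total sum. *)
Lemma moment_by_symmetry (s : seq 'I_n) (f : 'I_n -> R) k :
  uniq (k :: s) -> (forall q, {in s, forall x, q x = x} -> f \o q =1 f) ->
  f k = (\sum_l f l - \sum_(l <- s) f l) / (n%:R - (size s)%:R).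
Proof.
move=> /= /andP[ks us] f_inv.
have off l : l \notin s -> f l = f k.
  move=> ls; have fix_s : {in s, forall x, tperm k l x = x}.
    by move=> x xs; rewrite tpermD // eq_sym; [exact: (memPn ks) | exact: (memPn ls)].
  by have /= <- := f_inv _ fix_s k; rewrite tpermL.
have size_lt : (size s < n)%N.
  have := max_card (mem (k :: s)); rewrite card_ord.
  by have /card_uniqP -> : uniq (k :: s) by rewrite /= ks us.
have card_off : #|(fun l => l \notin s)| = (n - size s)%N.
  have := cardC (mem s); rewrite (card_uniqP us) card_ord => card_s.
  exact: canRL (addKn _) card_s.
have sub_size : n%:R - (size s)%:R = (n - size s)%:R :> R by rewrite natrB // ltnW.
rewrite (bigID (mem s)) /= -big_uniq //.
rewrite [X in _ + X - _](eq_bigr (fun _ => f k)); last by move=> l /off.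
rewrite sumr_const addrC addKr card_off -[f k *+ _]mulr_natr sub_size mulfK //.
by rewrite pnatr_eq0 subn_eq0 -ltnNge.
Qed.

(* [mu_p] is the value of [mom4] on index patterns of shape [p]. *)
Definition mu31 : R := - mu4 R n / (n%:R - 1).
Definition mu22 : R := (n%:R - mu4 R n) / (n%:R - 1).
Definition mu211 : R := - (mu31 + mu22) / (n%:R - 2).
Definition mu1111 : R := - 3 * mu211 / (n%:R - 3).

Lemma mom2_diag i : mom2 i i = 1.
Proof.
rewrite (moment_by_symmetry (s := [::]) (f := fun l => mom2 l l)) //=.
  by rewrite sum_mom2_diag big_nil !subr0 divff // pnatr_eq0 -lt0n ltnW.
by move=> q _ l /=; rewrite mom2_perm.
Qed.

Lemma mom2_offdiag i j : i != j -> mom2 i j = - 1 / (n%:R - 1).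
Proof.
move=> ij; rewrite (moment_by_symmetry (s := [:: i]) (f := mom2 i)) /=.
- by rewrite sum_mom2 big_seq1 mom2_diag sub0r mulr1n.
- by rewrite andbT inE eq_sym.
- by move=> q qs l; rewrite -[RHS](mom2_perm q) (qs i) // mem_head.
Qed.

Lemma mom4_4 i : mom4 i i i i = mu4 R n.
Proof.
rewrite (moment_by_symmetry (s := [::]) (f := fun l => mom4 l l l l)) //=.
  by rewrite sum_mom4_diag big_nil !subr0 [_ * mu4 R n]mulrC mulfK // pnatr_eq0 -lt0n ltnW.
by move=> q _ l /=; rewrite mom4_perm.
Qed.

Lemma mom4_31 i j : i != j -> mom4 i i i j = mu31.
Proof.
move=> ij; rewrite (moment_by_symmetry (s := [:: i]) (f := mom4 i i i)) /=.
- by rewrite sum_mom4 big_seq1 mom4_4 sub0r mulr1n.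
- by rewrite andbT inE eq_sym.
- by move=> q qs l; rewrite -[RHS](mom4_perm q) (qs i) // mem_head.
Qed.

Lemma mom4_22 i j : i != j -> mom4 i i j j = mu22.
Proof.
move=> ij; rewrite (moment_by_symmetry (s := [:: i]) (f := fun l => mom4 i i l l)) /=.
- by rewrite sum_mom4_sqr big_seq1 mom4_4 mom2_diag mulr1 mulr1n /mu22.
- by rewrite andbT inE eq_sym.
- by move=> q qs l; rewrite /= -[RHS](mom4_perm q) (qs i) // mem_head.
Qed.

Lemma mom4_211 i j k : i != j -> i != k -> j != k -> mom4 i i j k = mu211.
Proof.
move=> ij ik jk.
rewrite (moment_by_symmetry (s := [:: i; j]) (f := mom4 i i j)) /=.
- rewrite sum_mom4 !big_cons big_nil mom4C34 mom4_31 // mom4_22 //.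
  by rewrite /mu211 addr0 sub0r.
- by rewrite !inE !negb_or ![k == _]eq_sym ik jk ij.
- by move=> q qs l; rewrite -[RHS](mom4_perm q) (qs i) ?(qs j) // !inE eqxx ?orbT.
Qed.

Lemma mom4_1111 i j k l : i != j -> i != k -> j != k -> l != i -> l != j -> l != k ->
  mom4 i j k l = mu1111.
Proof.
move=> ij ik jk li lj lk.
have ji : j != i by rewrite eq_sym.
have ki : k != i by rewrite eq_sym.
have kj : k != j by rewrite eq_sym.
rewrite (moment_by_symmetry (s := [:: i; j; k]) (f := mom4 i j k)) /=.
- rewrite sum_mom4 !big_cons big_nil.
  rewrite [mom4 i j k i]mom4C34 [mom4 i j i k]mom4C23 mom4_211 //.
  rewrite [mom4 i j k j]mom4C34 [mom4 i j j k]mom4C12 [mom4 j i j k]mom4C23 mom4_211 //.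
  rewrite [mom4 i j k k]mom4C23 [mom4 i k j k]mom4C12 [mom4 k i j k]mom4C34.
  by rewrite [mom4 k i k j]mom4C23 mom4_211 // /mu1111; ring.
- by rewrite !inE !negb_or li lj lk ij ik jk.
- by move=> q qs m; rewrite -[RHS](mom4_perm q) (qs i) ?(qs j) ?(qs k) // !inE eqxx ?orbT.
Qed.

End Moments.
Arguments mom2 {R n} i j.
Arguments mom4 {R n} i j k l.

Section Contraction.
Variables (R : comPzRingType) (n : nat).
Implicit Types (i j k l : 'I_n) (A B : 'M[R]_n).

Definition delta i j : R := (i == j)%:R.

Lemma sum_delta i (F : 'I_n -> R) : \sum_j delta i j * F j = F i.
Proof.
rewrite (bigD1 i) //= big1 ?addr0 /delta ?eqxx ?mul1r // => j ji.
by rewrite eq_sym (negPf ji) mul0r.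
Qed.

Definition contract4 A B (F : 'I_n -> 'I_n -> 'I_n -> 'I_n -> R) : R :=
  \sum_i \sum_j \sum_k \sum_l A i j * B k l * F i j k l.

Lemma eq_contract4 A B F G : (forall i j k l, F i j k l = G i j k l) ->
  contract4 A B F = contract4 A B G.
Proof.
move=> FG; apply: eq_bigr => i _; apply: eq_bigr => j _.
by apply: eq_bigr => k _; apply: eq_bigr => l _; rewrite FG.
Qed.

Lemma contract4D A B F G :
  contract4 A B (fun i j k l => F i j k l + G i j k l) = contract4 A B F + contract4 A B G.
Proof.
rewrite /contract4 -big_split; apply: eq_bigr => i _; rewrite -big_split.
apply: eq_bigr => j _; rewrite -big_split; apply: eq_bigr => k _; rewrite -big_split.
by apply: eq_bigr => l _; rewrite mulrDr.
Qed.

Lemma contract4Z A B c F :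
  contract4 A B (fun i j k l => c * F i j k l) = c * contract4 A B F.
Proof.
rewrite /contract4 mulr_sumr; apply: eq_bigr => i _; rewrite mulr_sumr.
apply: eq_bigr => j _; rewrite mulr_sumr; apply: eq_bigr => k _; rewrite mulr_sumr.
by apply: eq_bigr => l _; rewrite mulrCA.
Qed.

Lemma contract4_tr_tr A B :
  contract4 A B (fun i j k l => delta i j * delta k l) = \tr A * \tr B.
Proof.
transitivity (\sum_i \sum_j A i j * delta i j * \tr B).
  apply: eq_bigr => i _; apply: eq_bigr => j _; rewrite mulr_sumr; apply: eq_bigr => k _.
  rewrite -(sum_delta k (fun l => A i j * delta i j * B k l)).
  by apply: eq_bigr => l _; ring.
rewrite mulr_suml; apply: eq_bigr => i _.
by rewrite -(sum_delta i (fun j => A i j * \tr B)); apply: eq_bigr => j _; ring.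
Qed.

Lemma contract4_tr_mulT A B :
  contract4 A B (fun i j k l => delta i k * delta j l) = \tr (A *m B^T).
Proof.
apply: eq_bigr => i _; rewrite mxE; apply: eq_bigr => j _; rewrite mxE.
rewrite -(sum_delta i (fun k => A i j * B k j)); apply: eq_bigr => k _.
rewrite -(sum_delta j (fun l => delta i k * (A i j * B k l))).
by apply: eq_bigr => l _; ring.
Qed.

Lemma contract4_tr_mul A B :
  contract4 A B (fun i j k l => delta i l * delta j k) = \tr (A *m B).
Proof.
apply: eq_bigr => i _; rewrite mxE; apply: eq_bigr => j _.
rewrite -(sum_delta j (fun k => A i j * B k i)); apply: eq_bigr => k _.
rewrite -(sum_delta i (fun l => delta j k * (A i j * B k l))).
by apply: eq_bigr => l _; ring.
Qed.

Lemma contract4_diag A B :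
  contract4 A B (fun i j k l => delta i j * delta j k * delta k l) = \sum_i A i i * B i i.
Proof.
apply: eq_bigr => i _.
rewrite -(sum_delta i (fun j => A i j * B j j)); apply: eq_bigr => j _.
rewrite -(sum_delta j (fun k => delta i j * (A i j * B k k))); apply: eq_bigr => k _.
rewrite -(sum_delta k (fun l => delta j k * (delta i j * (A i j * B k l)))).
by apply: eq_bigr => l _; ring.
Qed.

Section ZeroLineSums.
Variables A B : 'M[R]_n.
Hypotheses (A_row0 : forall i, \sum_j A i j = 0) (A_col0 : forall j, \sum_i A i j = 0).
Hypotheses (B_row0 : forall k, \sum_l B k l = 0) (B_col0 : forall l, \sum_k B k l = 0).
Implicit Type F : 'I_n -> 'I_n -> 'I_n -> R.

Lemma contract4_free_l F : contract4 A B (fun i j k _ => F i j k) = 0.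
Proof.
apply: big1 => i _; apply: big1 => j _; apply: big1 => k _ /=.
by rewrite -mulr_suml -mulr_sumr B_row0 mulr0 mul0r.
Qed.

Lemma contract4_free_k F : contract4 A B (fun i j _ l => F i j l) = 0.
Proof.
apply: big1 => i _; apply: big1 => j _; rewrite exchange_big; apply: big1 => l _ /=.
by rewrite -mulr_suml -mulr_sumr B_col0 mulr0 mul0r.
Qed.

Lemma contract4_free_j F : contract4 A B (fun i _ k l => F i k l) = 0.
Proof.
apply: big1 => i _; rewrite exchange_big; apply: big1 => k _ /=.
rewrite exchange_big; apply: big1 => l _ /=.
by rewrite -!mulr_suml A_row0 !mul0r.
Qed.

Lemma contract4_free_i F : contract4 A B (fun _ j k l => F j k l) = 0.
Proof.
rewrite /contract4 exchange_big; apply: big1 => j _ /=.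
rewrite exchange_big; apply: big1 => k _ /=; rewrite exchange_big; apply: big1 => l _ /=.
by rewrite -!mulr_suml A_col0 !mul0r.
Qed.

End ZeroLineSums.

End Contraction.
Arguments delta {R n} i j.

Section FourthMomentKernel.
Variables (R : realType) (n : nat).
Hypothesis n_ge2 : (2 <= n)%N.
Implicit Types (i j k l : 'I_n).

Local Notation mu4 := (mu4 R n).
Local Notation mu31 := (mu31 R n).
Local Notation mu22 := (mu22 R n).
Local Notation mu211 := (mu211 R n).
Local Notation mu1111 := (mu1111 R n).

(* Mobius inversion over the lattice of set partitions of {i, j, k, l}:
   [kap_p] is the coefficient of the product of Kronecker deltas of shape [p]. *)
Definition kap0 : R := mu1111.
Definition kap2 : R := mu211 - mu1111.
Definition kap22 : R := mu22 - 2 * mu211 + mu1111.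
Definition kap3 : R := mu31 - 3 * mu211 + 2 * mu1111.
Definition kap4 : R := mu4 - 6 * kap2 - 3 * kap22 - 4 * kap3 - kap0.

Definition mom4_kernel i j k l : R :=
  kap0
  + kap2 * (delta i j + delta i k + delta i l + delta j k + delta j l + delta k l)
  + kap22 * (delta i j * delta k l + delta i k * delta j l + delta i l * delta j k)
  + kap3 * (delta i j * delta j k + delta i j * delta j l
            + delta i k * delta k l + delta j k * delta k l)
  + kap4 * (delta i j * delta j k * delta k l).

Ltac eval_kernel :=
  rewrite /mom4_kernel /delta ?eqxx;
  repeat match goal with
  | H : is_true (?a != ?b) |- context [?a == ?b] => rewrite (negPf H)
  | H : is_true (?a != ?b) |- context [?b == ?a] => rewrite (eq_sym b a) (negPf H)
  end;
  rewrite /kap4 /kap3 /kap22 /kap2 /kap0 /=; ring.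

Lemma mom4E i j k l : mom4 i j k l = mom4_kernel i j k l.
Proof.
have [<-|ij] := eqVneq i j.
  have [<-|ik] := eqVneq i k.
    have [<-|il] := eqVneq i l; first by rewrite mom4_4 //; eval_kernel.
    by rewrite mom4_31 //; eval_kernel.
  have [<-|il] := eqVneq i l; first by rewrite mom4C34 mom4_31 //; eval_kernel.
  have [<-|kl] := eqVneq k l; first by rewrite mom4_22 //; eval_kernel.
  by rewrite mom4_211 //; eval_kernel.
have [<-|ik] := eqVneq i k.
  have [<-|il] := eqVneq i l; first by rewrite mom4C23 mom4C34 mom4_31 //; eval_kernel.
  have [<-|jl] := eqVneq j l; first by rewrite mom4C23 mom4_22 //; eval_kernel.
  by rewrite mom4C23 mom4_211 //; eval_kernel.
have [<-|jk] := eqVneq j k.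
  have [<-|jl] := eqVneq j l.
    by rewrite mom4C12 mom4C23 mom4C34 mom4_31 1?eq_sym //; eval_kernel.
  have [<-|il] := eqVneq i l; first by rewrite mom4C34 mom4C23 mom4_22 //; eval_kernel.
  by rewrite mom4C12 mom4C23 mom4_211 1?eq_sym //; eval_kernel.
have [<-|il] := eqVneq i l; first by rewrite mom4C34 mom4C23 mom4_211 //; eval_kernel.
have [<-|jl] := eqVneq j l.
  by rewrite mom4C34 mom4C12 mom4C23 mom4_211 1?eq_sym //; eval_kernel.
have [<-|kl] := eqVneq k l.
  by rewrite mom4C23 mom4C12 mom4C34 mom4C23 mom4_211 1?eq_sym //; eval_kernel.
by rewrite mom4_1111 1?eq_sym //; eval_kernel.
Qed.

Lemma contract4_mom4_kernel (A B : 'M[R]_n) :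
  (forall i, \sum_j A i j = 0) -> (forall j, \sum_i A i j = 0) ->
  (forall k, \sum_l B k l = 0) -> (forall l, \sum_k B k l = 0) ->
  contract4 A B mom4_kernel =
  kap22 * (\tr A * \tr B + \tr (A *m B^T) + \tr (A *m B)) + kap4 * \sum_i A i i * B i i.
Proof.
move=> A_row0 A_col0 B_row0 B_col0.
pose free_l i j k :=
  kap0 + kap2 * (delta i j + delta i k + delta j k) + kap3 * (delta i j * delta j k).
pose free_k i j l := kap2 * (delta i l + delta j l) + kap3 * (delta i j * delta j l).
pose free_j i k l := kap2 * delta k l + kap3 * (delta i k * delta k l).
pose free_i j k l := kap3 * (delta j k * delta k l).
rewrite (@eq_contract4 _ _ A B _ (fun i j k l =>
  free_l i j k + free_k i j l + free_j i k l + free_i j k l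
  + (kap22 * (delta i j * delta k l + delta i k * delta j l + delta i l * delta j k)
     + kap4 * (delta i j * delta j k * delta k l)))); last first.
  by move=> i j k l; rewrite /mom4_kernel /free_l /free_k /free_j /free_i; ring.
rewrite 4!contract4D contract4_free_l // contract4_free_k // contract4_free_j //.
rewrite contract4_free_i // !add0r contract4D !contract4Z !contract4D.
by rewrite contract4_tr_tr contract4_tr_mulT contract4_tr_mul contract4_diag.
Qed.

End FourthMomentKernel.

Section DoubleCentering.
Variables (F : fieldType) (n : nat).
Hypothesis n_neq0 : n%:R != 0 :> F.
Implicit Types (A B M : 'M[F]_n) (i j : 'I_n).

Definition rowsum M i : F := \sum_j M i j.

Definition mxsum M : F := \sum_i rowsum M i.

Definition dcenter M : 'M[F]_n :=
  \matrix_(i, j) (M i j - rowsum M i / n%:R - rowsum M j / n%:R + mxsum M / n%:R ^+ 2).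

Lemma sum_mul_shift_zero M (u v : 'I_n -> F) :
  (forall i, \sum_j M i j = 0) -> (forall j, \sum_i M i j = 0) ->
  \sum_i \sum_j M i j * (u i + v j) = 0.
Proof.
move=> row0 col0.
rewrite (eq_bigr (fun i => u i * \sum_j M i j + \sum_j M i j * v j)); last first.
  by move=> i _; rewrite mulr_sumr -big_split; apply: eq_bigr => j _ /=; ring.
rewrite big_split /= exchange_big /= big1 => [|i _]; last by rewrite row0 mulr0.
by rewrite add0r big1 // => j _; rewrite -mulr_suml col0 mul0r.
Qed.

Lemma dcenter_shift M i j :
  dcenter M i j = M i j + ((mxsum M / n%:R ^+ 2 - rowsum M i / n%:R) + - (rowsum M j / n%:R)).
Proof. by rewrite mxE; ring. Qed.

Lemma dcenter_row0 M i : \sum_j dcenter M i j = 0.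
Proof.
transitivity (rowsum M i - rowsum M i / n%:R * \sum_(j < n) 1 - \sum_j rowsum M j / n%:R
              + mxsum M / n%:R ^+ 2 * \sum_(j < n) 1).
  rewrite !mulr_sumr -!sumrB -big_split; apply: eq_bigr => j _ /=; rewrite mxE; ring.
by rewrite -mulr_suml -/(mxsum M) sumr_const card_ord; field.
Qed.

Lemma dcenter_sym M : M^T = M -> (dcenter M)^T = dcenter M.
Proof.
move=> sM; apply/matrixP => i j; rewrite !mxE.
have -> : M j i = M i j by rewrite -[in LHS]sM mxE.
ring.
Qed.

Lemma dcenter_col0 M j : M^T = M -> \sum_i dcenter M i j = 0.
Proof.
move=> sM; rewrite -[RHS](dcenter_row0 M j); apply: eq_bigr => i _.
by rewrite -[in RHS](dcenter_sym sM) [in RHS]mxE.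
Qed.

Lemma mxtrace_dcenter M : \tr (dcenter M) = \tr M - mxsum M / n%:R.
Proof.
transitivity (\tr M - 2 / n%:R * \sum_i rowsum M i + mxsum M / n%:R ^+ 2 * \sum_(i < n) 1).
  rewrite /mxtrace !mulr_sumr -sumrB -big_split; apply: eq_bigr => i _ /=; rewrite mxE; ring.
by rewrite -/(mxsum M) sumr_const card_ord; field.
Qed.

Lemma bilinear_dcenter M (x y : 'I_n -> F) : \sum_i x i = 0 -> \sum_j y j = 0 ->
  \sum_i \sum_j x i * dcenter M i j * y j = \sum_i \sum_j x i * M i j * y j.
Proof.
move=> x0 y0; apply/eqP; rewrite -subr_eq0 -sumrB; apply/eqP.
rewrite -[RHS](sum_mul_shift_zero (M := \matrix_(i, j) (x i * y j))
  (fun i => mxsum M / n%:R ^+ 2 - rowsum M i / n%:R) (fun j => - (rowsum M j / n%:R))).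
- apply: eq_bigr => i _; rewrite -sumrB; apply: eq_bigr => j _.
  by rewrite dcenter_shift !mxE; ring.
- by move=> i; under eq_bigr do rewrite mxE; rewrite -mulr_sumr y0 mulr0.
- by move=> j; under eq_bigr do rewrite mxE; rewrite -mulr_suml x0 mul0r.
Qed.

Lemma mxtrace_mul_trmx A B : \tr (A *m B^T) = \sum_i \sum_j A i j * B i j.
Proof. by apply: eq_bigr => i _; rewrite mxE; apply: eq_bigr => j _; rewrite mxE. Qed.

Lemma mxtrace_mul_dcenter A B : A^T = A -> B^T = B ->
  \tr (dcenter A *m dcenter B) =
  \tr (A *m B) - 2 / n%:R * \sum_i rowsum A i * rowsum B i + mxsum A * mxsum B / n%:R ^+ 2.
Proof.
move=> sA sB; have -> : \tr (A *m B) = \tr (A *m B^T) by rewrite sB.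
rewrite -{1}(dcenter_sym sB) !mxtrace_mul_trmx.
transitivity (\sum_i \sum_j dcenter A i j * B i j).
  (* the centering of [B] is invisible to [dcenter A], whose lines sum to zero *)
  apply/eqP; rewrite -subr_eq0 -sumrB; apply/eqP.
  rewrite -[RHS](sum_mul_shift_zero (fun i => mxsum B / n%:R ^+ 2 - rowsum B i / n%:R)
    (fun j => - (rowsum B j / n%:R)) (dcenter_row0 A) (fun j => dcenter_col0 j sA)).
  by apply: eq_bigr => i _; rewrite -sumrB; apply: eq_bigr => j _; rewrite (dcenter_shift B); ring.
have symB i j : B i j = B j i by rewrite -[in LHS]sB mxE.
transitivity (\sum_i \sum_j (A i j * B i j
    + (mxsum A / n%:R ^+ 2 - rowsum A i / n%:R) * B i j - rowsum A j / n%:R * B j i)).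
  by apply: eq_bigr => i _; apply: eq_bigr => j _; rewrite dcenter_shift -symB; ring.
under eq_bigr => i _ do rewrite sumrB big_split /= -mulr_sumr -/(rowsum B i).
rewrite sumrB big_split /= [X in _ - X](exchange_big_dep xpredT) //=.
under [X in _ - X]eq_bigr => j _ do rewrite -mulr_sumr -/(rowsum B j).
have avg_rowsum : \sum_i rowsum A i / n%:R * rowsum B i = (\sum_i rowsum A i * rowsum B i) / n%:R.
  by rewrite mulr_suml; apply: eq_bigr => i _; rewrite mulrAC.
under [X in _ + X - _]eq_bigr do rewrite mulrBl.
rewrite sumrB avg_rowsum -mulr_sumr -/(mxsum B).
by field.
Qed.

Lemma sum_diag_dcenter A B :
  \sum_i dcenter A i i * dcenter B i i =
  \sum_i A i i * B i i - 2 / n%:R * (\sum_i A i i * rowsum B i + \sum_i B i i * rowsum A i)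
  + (mxsum B * \tr A + mxsum A * \tr B) / n%:R ^+ 2
  + 4 / n%:R ^+ 2 * \sum_i rowsum A i * rowsum B i - 3 * mxsum A * mxsum B / n%:R ^+ 3.
Proof.
transitivity (\sum_i (A i i * B i i + (-2 / n%:R) * (A i i * rowsum B i)
  + (-2 / n%:R) * (B i i * rowsum A i) + (mxsum B / n%:R ^+ 2) * A i i
  + (mxsum A / n%:R ^+ 2) * B i i + (4 / n%:R ^+ 2) * (rowsum A i * rowsum B i)
  + (-2 * mxsum B / n%:R ^+ 3) * rowsum A i + (-2 * mxsum A / n%:R ^+ 3) * rowsum B i
  + (mxsum A * mxsum B / n%:R ^+ 4) * 1)).
  by apply: eq_bigr => i _; rewrite !mxE; field.
rewrite !big_split /= -!mulr_sumr -!/(mxsum _) -!/(\tr _) sumr_const card_ord.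
by field.
Qed.

End DoubleCentering.

Section QuadraticForms.
Variables (R : realType) (n : nat).
Hypothesis n_ge2 : (2 <= n)%N.
Implicit Types (A B : 'M[R]_n) (x : 'cV[R]_n).

Let n_neq0 : n%:R != 0 :> R.
Proof. by rewrite pnatr_eq0 -lt0n ltnW. Qed.

Lemma qformE A x : qform A x = \sum_i \sum_j x i 0 * A i j * x j 0.
Proof.
rewrite /qform mxE exchange_big /=; apply: eq_bigr => j _.
by rewrite mxE mulr_suml; apply: eq_bigr => i _; rewrite mxE.
Qed.

Lemma qform_dcenter A p : qform (dcenter A) (svec p) = qform A (svec p).
Proof. by rewrite !qformE bilinear_dcenter // sum_svec. Qed.

Lemma Eperm_qform A : Eperm (fun p => qform A (svec p)) = \sum_i \sum_j A i j * mom2 i j.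
Proof.
under eq_Eperm do rewrite qformE.
rewrite Eperm_sum; apply: eq_bigr => i _; rewrite Eperm_sum; apply: eq_bigr => j _.
by rewrite -EpermZ; apply: eq_Eperm => p; ring.
Qed.

Lemma Eperm_qform_mul A B :
  Eperm (fun p => qform A (svec p) * qform B (svec p)) = contract4 A B mom4.
Proof.
rewrite (eq_Eperm (g := fun p => \sum_i \sum_j \sum_k \sum_l A i j * B k l *
    (svec p i 0 * svec p j 0 * svec p k 0 * svec p l 0))); last first.
  move=> p; rewrite !qformE mulr_suml; apply: eq_bigr => i _.
  rewrite mulr_suml; apply: eq_bigr => j _; rewrite mulr_sumr; apply: eq_bigr => k _.
  by rewrite mulr_sumr; apply: eq_bigr => l _; ring.
rewrite Eperm_sum; apply: eq_bigr => i _; rewrite Eperm_sum; apply: eq_bigr => j _.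
rewrite Eperm_sum; apply: eq_bigr => k _; rewrite Eperm_sum; apply: eq_bigr => l _.
exact: EpermZ.
Qed.

Lemma mom2_Sigma i j : mom2 i j = Sigma R n i j.
Proof.
have n1_neq0 : n%:R - 1 != 0 :> R by rewrite subr_eq0 pnatr_eq1 gtn_eqF.
rewrite !mxE; have [<-|ij] := eqVneq i j.
  by rewrite mom2_diag //= mulr1n; field; rewrite n_neq0 n1_neq0.
by rewrite mom2_offdiag //= mulr0n; field; rewrite n_neq0 n1_neq0.
Qed.

Lemma Eperm_qform_Sigma A : Eperm (fun p => qform A (svec p)) = \tr (Sigma R n *m A).
Proof.
rewrite Eperm_qform exchange_big; apply: eq_bigr => j _; rewrite mxE.
by apply: eq_bigr => i _; rewrite mom2C mom2_Sigma mulrC.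
Qed.

Lemma mxtrace_Sigma_mul A : \tr (Sigma R n *m A) = n%:R / (n%:R - 1) * \tr (dcenter A).
Proof.
rewrite mxtrace_dcenter // /Sigma -scalemxAl mxtraceZ mulmxBl mul1mx -scalemxAl.
rewrite linearB /= mxtraceZ [_^-1 * _]mulrC; congr (_ * (_ - _ / _)).
rewrite /mxsum exchange_big; apply: eq_bigr => i _; rewrite mxE.
by apply: eq_bigr => k _; rewrite mxE mul1r.
Qed.

Lemma Covperm_qform A B : A^T = A -> B^T = B ->
  Covperm (fun p => qform A (svec p)) (fun p => qform B (svec p)) =
  kap22 R n * (\tr (dcenter A) * \tr (dcenter B) + 2 * \tr (dcenter A *m dcenter B))
  + kap4 R n * \sum_i dcenter A i i * dcenter B i i
  - (n%:R / (n%:R - 1)) ^+ 2 * \tr (dcenter A) * \tr (dcenter B).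
Proof.
move=> sA sB; rewrite /Covperm !Eperm_qform_Sigma !mxtrace_Sigma_mul.
under eq_Eperm do rewrite -(qform_dcenter A) -(qform_dcenter B).
rewrite Eperm_qform_mul (eq_contract4 _ _ (mom4E R n_ge2)).
rewrite contract4_mom4_kernel ?dcenter_sym //; first by ring.
all: by [move=> i; apply: dcenter_row0 | move=> j; apply: dcenter_col0].
Qed.

End QuadraticForms.

Section NormArith.
Variable R : numFieldType.
Implicit Types x y c d X Y M : R.

Lemma ler_normD_le x y X Y : `|x| <= X -> `|y| <= Y -> `|x + y| <= X + Y.
Proof. by move=> hx hy; apply: le_trans (ler_normD _ _) (lerD hx hy). Qed.

Lemma ler_normB_le x y X Y : `|x| <= X -> `|y| <= Y -> `|x - y| <= X + Y.
Proof. by move=> hx hy; apply: ler_normD_le; rewrite ?normrN. Qed.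

Lemma ler_normM_le x y X Y : `|x| <= X -> `|y| <= Y -> `|x * y| <= X * Y.
Proof. by move=> hx hy; rewrite normrM ler_pM ?normr_ge0. Qed.

Lemma ler_norm_div x d M : 0 < d -> `|x| <= d * M -> `|x / d| <= M.
Proof. by move=> d_gt0 hx; rewrite normrM normfV (gtr0_norm d_gt0) ler_pdivrMr // mulrC. Qed.

Lemma ler_norm_mul_scaled c x d X M :
  0 < d -> `|c| <= X / d -> `|x| <= d * M -> `|c * x| <= X * M.
Proof.
move=> d_gt0 hc hx; apply: le_trans (ler_normM_le hc hx) _.
by rewrite mulrA divfK ?gt_eqF.
Qed.

Lemma ler_norm_frac (p q k m : R) : 0 < q -> 0 < m -> `|p| * m <= k * q -> `|p / q| <= k / m.
Proof.
move=> q_gt0 m_gt0 h.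
by rewrite normrM normfV (gtr0_norm q_gt0) ler_pdivlMr // mulrAC ler_pdivrMr.
Qed.

End NormArith.

Lemma cauchy_schwarz_sqr (R : realFieldType) n (u v : 'I_n -> R) :
  (\sum_i u i * v i) ^+ 2 <= (\sum_i u i ^+ 2) * (\sum_i v i ^+ 2).
Proof.
have sum_mul (f g : 'I_n -> R) : (\sum_i f i) * (\sum_j g j) = \sum_i \sum_j f i * g j.
  by rewrite mulr_suml; apply: eq_bigr => i _; rewrite mulr_sumr.
have lagrange : \sum_i \sum_j (u i * v j - u j * v i) ^+ 2 =
    2 * ((\sum_i u i ^+ 2) * (\sum_i v i ^+ 2) - (\sum_i u i * v i) ^+ 2).
  rewrite expr2 !sum_mul.
  transitivity (\sum_i \sum_j (u i ^+ 2 * v j ^+ 2) + \sum_i \sum_j (u j ^+ 2 * v i ^+ 2)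
                - 2 * \sum_i \sum_j (u i * v i * (u j * v j))).
    rewrite -big_split mulr_sumr -sumrB; apply: eq_bigr => i _.
    by rewrite -big_split mulr_sumr -sumrB; apply: eq_bigr => j _ /=; ring.
  by rewrite [X in _ + X - _]exchange_big /=; ring.
have : 0 <= \sum_i \sum_j (u i * v j - u j * v i) ^+ 2.
  by apply: sumr_ge0 => i _; apply: sumr_ge0 => j _; apply: sqr_ge0.
by rewrite lagrange; nra.
Qed.

Section SpectralNorm.
Variables (R : realType) (n : nat).
Implicit Types (A B : 'M[R]_n) (x u v : 'cV[R]_n).

Lemma vnorm2_ge0 x : 0 <= vnorm2 x.
Proof. exact: sqrtr_ge0. Qed.

Lemma vnorm2_sqr x : vnorm2 x ^+ 2 = \sum_i x i 0 ^+ 2.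
Proof. by rewrite sqr_sqrtr // sumr_ge0 // => i _; apply: sqr_ge0. Qed.

Lemma vnorm2Z (c : R) x : vnorm2 (c *: x) = `|c| * vnorm2 x.
Proof.
rewrite /vnorm2 -sqrtr_sqr -sqrtrM ?sqr_ge0 //; congr Num.sqrt.
by rewrite mulr_sumr; apply: eq_bigr => i _; rewrite mxE exprMn.
Qed.

Lemma vnorm2_eq0 x : (vnorm2 x == 0) = (x == 0).
Proof.
apply/eqP/eqP => [x0|->]; last first.
  by rewrite /vnorm2 big1 ?sqrtr0 // => i _; rewrite mxE expr0n.
apply/matrixP => i j; rewrite (ord1 j) mxE.
have /eqP : \sum_i x i 0 ^+ 2 = 0 by rewrite -vnorm2_sqr x0 expr0n.
rewrite psumr_eq0 => [/allP /(_ i) |k _]; last exact: sqr_ge0.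
by rewrite mem_index_enum sqrf_eq0 => /(_ isT) /eqP.
Qed.

Lemma ler_norm_cauchy_schwarz u v :
  `|\sum_i u i 0 * v i 0| <= vnorm2 u * vnorm2 v.
Proof.
rewrite -sqrtrM; last by apply: sumr_ge0 => i _; apply: sqr_ge0.
by rewrite -sqrtr_sqr ler_wsqrtr // cauchy_schwarz_sqr.
Qed.

Lemma vnorm2_0 : vnorm2 (0 : 'cV[R]_n) = 0.
Proof. by apply/eqP; rewrite vnorm2_eq0. Qed.

Lemma specnorm_has_sup A :
  has_sup [set vnorm2 (A *m x) | x in [set x : 'cV[R]_n | vnorm2 x <= 1]].
Proof.
split; first by exists (vnorm2 (A *m 0)), 0; rewrite //= vnorm2_0 ler01.
exists (Num.sqrt (\sum_i \sum_j A i j ^+ 2)) => _ [x /= x_le1 <-].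
rewrite ler_wsqrtr // ler_sum // => i _; rewrite mxE.
apply: le_trans (cauchy_schwarz_sqr (fun j => A i j) (fun j => x j 0)) _.
have x2_le1 : \sum_j x j 0 ^+ 2 <= 1 by rewrite -vnorm2_sqr; have := vnorm2_ge0 x; nra.
have : 0 <= \sum_j A i j ^+ 2 by apply: sumr_ge0 => j _; apply: sqr_ge0.
by nra.
Qed.

Lemma ler_vnorm2_specnorm A x : vnorm2 x <= 1 -> vnorm2 (A *m x) <= specnorm A.
Proof. by move=> x_le1; apply: (sup_upper_bound (specnorm_has_sup A)); exists x. Qed.

Lemma specnorm_ge0 A : 0 <= specnorm A.
Proof.
by have := ler_vnorm2_specnorm A (x := 0); rewrite mulmx0 vnorm2_0; apply; rewrite ler01.
Qed.

Lemma ler_vnorm2_mul A v : vnorm2 (A *m v) <= specnorm A * vnorm2 v.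
Proof.
have [v0|v_neq0] := eqVneq v 0; first by rewrite v0 mulmx0 vnorm2_0 mulr0.
have v_gt0 : 0 < vnorm2 v by rewrite lt_neqAle eq_sym vnorm2_eq0 v_neq0 vnorm2_ge0.
have := ler_vnorm2_specnorm A (x := (vnorm2 v)^-1 *: v).
rewrite -scalemxAr !vnorm2Z ger0_norm ?invr_ge0 ?vnorm2_ge0 // mulVf ?gt_eqF // lexx.
by rewrite ler_pdivrMl // mulrC => /(_ isT).
Qed.

Lemma ler_norm_bilinear A u v :
  `|\sum_i u i 0 * (A *m v) i 0| <= vnorm2 u * (specnorm A * vnorm2 v).
Proof.
apply: le_trans (ler_norm_cauchy_schwarz u (A *m v)) _.
by rewrite ler_wpM2l ?vnorm2_ge0 // ler_vnorm2_mul.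
Qed.

End SpectralNorm.

Section SpectralBounds.
Variables (R : realType) (n : nat).
Implicit Types (A B : 'M[R]_n) (i j k : 'I_n).

Local Notation e k := (delta_mx k 0 : 'cV[R]_n).
Local Notation ones := (const_mx 1 : 'cV[R]_n).

Lemma sum_delta_mx_mul k (F : 'I_n -> R) : \sum_i e k i 0 * F i = F k.
Proof.
rewrite (bigD1 k) //= big1 ?addr0 ?mxE ?eqxx ?mul1r // => i ik.
by rewrite mxE (negPf ik) mul0r.
Qed.

Lemma vnorm2_delta k : vnorm2 (e k) = 1.
Proof.
rewrite /vnorm2 (eq_bigr (fun i => e k i 0 * 1)) ?sum_delta_mx_mul ?sqrtr1 // => i _.
by rewrite mxE mulr1; case: (i == k); rewrite ?expr0n ?expr1n.
Qed.

Lemma vnorm2_ones : vnorm2 ones = Num.sqrt n%:R.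
Proof.
by rewrite /vnorm2 (eq_bigr (fun _ => 1)) ?sumr_const ?card_ord // => i _; rewrite mxE expr1n.
Qed.

Lemma sumr_const_ord (c : R) : \sum_(i < n) c = n%:R * c.
Proof. by rewrite sumr_const card_ord mulr_natl. Qed.

Lemma sqrt_natr_sqr : Num.sqrt (n%:R : R) ^+ 2 = n%:R.
Proof. by rewrite sqr_sqrtr ?ler0n. Qed.

Lemma mulmx_delta A i j : (A *m e j) i 0 = A i j.
Proof. by rewrite -colE mxE. Qed.

Lemma mulmx_ones A i : (A *m ones) i 0 = rowsum A i.
Proof. by rewrite mxE; apply: eq_bigr => j _; rewrite mxE mulr1. Qed.

Lemma ler_norm_entry A i j : `|A i j| <= specnorm A.
Proof.
have := ler_norm_bilinear A (e i) (e j).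
by rewrite sum_delta_mx_mul mulmx_delta !vnorm2_delta mul1r mulr1.
Qed.

Lemma ler_norm_mxtrace A : `|\tr A| <= n%:R * specnorm A.
Proof.
apply: le_trans (ler_norm_sum _ _ _) _.
by rewrite -sumr_const_ord ler_sum // => i _; apply: ler_norm_entry.
Qed.

Lemma ler_norm_mxsum A : `|mxsum A| <= n%:R * specnorm A.
Proof.
have := ler_norm_bilinear A ones ones.
rewrite (eq_bigr (fun i => rowsum A i)) => [|i _]; last by rewrite mulmx_ones mxE mul1r.
by rewrite vnorm2_ones mulrCA -expr2 sqrt_natr_sqr mulrC.
Qed.

Lemma ler_vnorm2_ones A : vnorm2 (A *m ones) <= Num.sqrt n%:R * specnorm A.
Proof. by rewrite mulrC -vnorm2_ones ler_vnorm2_mul. Qed.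

Lemma ler_norm_sum_rowsum_mul A B :
  `|\sum_i rowsum A i * rowsum B i| <= n%:R * (specnorm A * specnorm B).
Proof.
under eq_bigr do rewrite -!mulmx_ones.
apply: le_trans (ler_norm_cauchy_schwarz _ _) _.
apply: le_trans (ler_pM (vnorm2_ge0 _) (vnorm2_ge0 _) (ler_vnorm2_ones A) (ler_vnorm2_ones B)) _.
by rewrite mulrACA -expr2 sqrt_natr_sqr.
Qed.

Lemma ler_norm_sum_diag_rowsum A B :
  `|\sum_i A i i * rowsum B i| <= n%:R * (specnorm A * specnorm B).
Proof.
have diag_le : vnorm2 (\col_i A i i) <= Num.sqrt n%:R * specnorm A.
  rewrite /vnorm2 -(ger0_norm (specnorm_ge0 A)) -sqrtr_sqr -sqrtrM ?ler0n // ler_wsqrtr //.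
  rewrite -sumr_const_ord ler_sum // => i _.
  by rewrite mxE -(real_normK (num_real (A i i))) !expr2 ler_pM ?normr_ge0 ?ler_norm_entry.
have := ler_norm_bilinear B (\col_i A i i) ones.
rewrite (eq_bigr (fun i => A i i * rowsum B i)) => [|i _]; last by rewrite mulmx_ones mxE.
move/le_trans; apply; rewrite vnorm2_ones.
apply: le_trans (ler_wpM2r _ diag_le) _; first by rewrite mulr_ge0 ?specnorm_ge0 ?sqrtr_ge0.
have -> : Num.sqrt n%:R * specnorm A * (specnorm B * Num.sqrt n%:R) =
          Num.sqrt n%:R ^+ 2 * (specnorm A * specnorm B) by ring.
by rewrite sqrt_natr_sqr.
Qed.

Lemma ler_norm_mxtrace_mul_trmx A B :
  `|\tr (A *m B^T)| <= n%:R * (specnorm A * specnorm B).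
Proof.
rewrite mxtrace_mul_trmx exchange_big /=; apply: le_trans (ler_norm_sum _ _ _) _.
rewrite -sumr_const_ord ler_sum // => j _.
under eq_bigr do rewrite -(mulmx_delta A) -(mulmx_delta B).
apply: le_trans (ler_norm_cauchy_schwarz _ _) _.
by apply: ler_pM; rewrite ?vnorm2_ge0 // -[X in _ <= X]mulr1 -(vnorm2_delta j) ler_vnorm2_mul.
Qed.

Lemma ler_norm_sum_diag_mul A B :
  `|\sum_i A i i * B i i| <= n%:R * (specnorm A * specnorm B).
Proof.
apply: le_trans (ler_norm_sum _ _ _) _.
rewrite -sumr_const_ord ler_sum // => i _.
by rewrite normrM ler_pM ?normr_ge0 ?ler_norm_entry.
Qed.

End SpectralBounds.

Section KernelAsymptotics.
Variables (R : realType) (n : nat).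
Hypothesis n_ge4 : (4 <= n)%N.

Let N_ge4 : 4 <= n%:R :> R.
Proof. by rewrite (ler_nat R 4). Qed.

Lemma kap22E : kap22 R n = 1 + (6 * n%:R + 5) / (5 * (n%:R ^+ 2 - 1)).
Proof.
have N4 := N_ge4.
rewrite /kap22 /mu1111 /mu211 /mu22 /mu31 /mu4; field.
by apply/and4P; split; apply/eqP => e; nra.
Qed.

Lemma kap4E : kap4 R n = - 6 / 5 - 6 * (2 * n%:R - 1) / (5 * (n%:R - 1) ^+ 2).
Proof.
have N4 := N_ge4.
rewrite /kap4 /kap0 /kap2 /kap3 /kap22 /mu1111 /mu211 /mu22 /mu31 /mu4; field.
by apply/and4P; split; apply/eqP => e; nra.
Qed.

Lemma ler_norm_kap22_sub1 : `|kap22 R n - 1| <= 2 / n%:R.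
Proof.
have N4 := N_ge4; rewrite kap22E addrC addKr.
apply: ler_norm_frac; [nra | lra | rewrite ger0_norm; nra].
Qed.

Lemma ler_norm_kap4_add : `|kap4 R n + 6 / 5| <= 5 / n%:R.
Proof.
have N4 := N_ge4; rewrite kap4E.
have -> : - 6 / 5 - 6 * (2 * n%:R - 1) / (5 * (n%:R - 1) ^+ 2) + 6 / 5 =
          - 6 * (2 * n%:R - 1) / (5 * (n%:R - 1) ^+ 2) :> R by ring.
apply: ler_norm_frac; [nra | lra | rewrite ler0_norm; nra].
Qed.

Lemma ler_norm_kap22_mean_defect :
  `|kap22 R n - (n%:R / (n%:R - 1)) ^+ 2 + 4 / (5 * n%:R)| <= 6 / n%:R ^+ 2.
Proof.
have N4 := N_ge4; rewrite kap22E.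
have -> : 1 + (6 * n%:R + 5) / (5 * (n%:R ^+ 2 - 1)) - (n%:R / (n%:R - 1)) ^+ 2
          + 4 / (5 * n%:R) =
    (4 - 4 * n%:R - 10 * n%:R ^+ 2) / (5 * n%:R * (n%:R ^+ 2 - 1) * (n%:R - 1)) :> R.
  by field; apply/and3P; split; apply/eqP => e; nra.
apply: ler_norm_frac; [nra | nra | rewrite ler0_norm; nra].
Qed.

End KernelAsymptotics.

Lemma ler_norm_qform_svec (R : realType) n (M : 'M[R]_n) (p : 'S_n) : (2 <= n)%N ->
  `|qform M (svec p)| <= n%:R * specnorm M.
Proof.
move=> n_ge2; have -> : qform M (svec p) = \sum_i svec p i 0 * (M *m svec p) i 0.
  by rewrite /qform -mulmxA mxE; apply: eq_bigr => i _; rewrite mxE.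
apply: le_trans (ler_norm_bilinear _ _ _) _.
by rewrite mulrCA -expr2 vnorm2_sqr sum_svec_sqr // mulrC.
Qed.

Section CovarianceBound.
Variables (R : realType) (n : nat) (A B : 'M[R]_n).
Hypotheses (n_ge2 : (2 <= n)%N) (symA : A^T = A) (symB : B^T = B).

Local Notation N := (n%:R : R).
Local Notation a := (specnorm A).
Local Notation b := (specnorm B).

Definition cov_target : R :=
  2 * \tr (A *m B) - 6 / 5 * \tr (hadamard A B) - 4 / (5 * N) * \tr A * \tr B.

Lemma mxtrace_hadamard : \tr (hadamard A B) = \sum_i A i i * B i i.
Proof. by apply: eq_bigr => i _; rewrite mxE. Qed.

Let N_gt0 : 0 < N.
Proof. by rewrite ltr0n ltnW. Qed.

Let N_neq0 : N != 0.
Proof. exact: lt0r_neq0. Qed.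

Let N_ge1 : 1 <= N.
Proof. by rewrite ler1n ltnW. Qed.

Let ab_ge0 : 0 <= a * b.
Proof. by rewrite mulr_ge0 ?specnorm_ge0. Qed.

Let ler_norm_divN (x M : R) : 0 <= M -> `|x| <= M -> `|x / N| <= M.
Proof.
move=> M_ge0 hx; apply: ler_norm_div => //; apply: le_trans hx _.
by rewrite ler_peMl.
Qed.

Lemma ler_norm_mxsum_div (M : 'M[R]_n) : `|mxsum M / N| <= specnorm M.
Proof. exact/ler_norm_div/ler_norm_mxsum. Qed.

Lemma ler_norm_mxtrace_dcenter (M : 'M[R]_n) : `|\tr (dcenter M)| <= N * (2 * specnorm M).
Proof.
have m_ge0 := specnorm_ge0 M.
rewrite mxtrace_dcenter //.
apply: le_trans (ler_normB_le (ler_norm_mxtrace M) (ler_norm_mxsum_div M)) _.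
by have := N_ge1; nra.
Qed.

Lemma ler_norm_mxtrace_mul_dcenter_sub :
  `|\tr (dcenter A *m dcenter B) - \tr (A *m B)| <= 3 * (a * b).
Proof.
rewrite mxtrace_mul_dcenter //.
have -> : \tr (A *m B) - 2 / N * \sum_i rowsum A i * rowsum B i + mxsum A * mxsum B / N ^+ 2
          - \tr (A *m B) =
          mxsum A / N * (mxsum B / N) - 2 * ((\sum_i rowsum A i * rowsum B i) / N).
  by field.
have two : `|2 : R| <= 2 by rewrite ger0_norm.
have S_le := ler_norm_div N_gt0 (ler_norm_sum_rowsum_mul A B).
apply: le_trans (ler_normB_le (ler_normM_le (ler_norm_mxsum_div A) (ler_norm_mxsum_div B))
                              (ler_normM_le two S_le)) _.
by have := ab_ge0; lra.
Qed.

Lemma ler_norm_sum_diag_dcenter_sub :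
  `|\sum_i dcenter A i i * dcenter B i i - \sum_i A i i * B i i| <= 13 * (a * b).
Proof.
rewrite sum_diag_dcenter //.
set H := \sum_i A i i * B i i.
set D1 := \sum_i A i i * rowsum B i; set D2 := \sum_i B i i * rowsum A i.
set S := \sum_i rowsum A i * rowsum B i.
have -> : H - 2 / N * (D1 + D2) + (mxsum B * \tr A + mxsum A * \tr B) / N ^+ 2
          + 4 / N ^+ 2 * S - 3 * mxsum A * mxsum B / N ^+ 3 - H =
    (mxsum B / N * (\tr A / N) + mxsum A / N * (\tr B / N))
    - 2 * (D1 / N + D2 / N) + 4 * (S / N / N) - 3 * (mxsum A / N * (mxsum B / N) / N).
  by field.
have const_le (c : R) : 0 <= c -> `|c| <= c by move=> c_ge0; rewrite ger0_norm.
have D1_le : `|D1 / N| <= a * b := ler_norm_div N_gt0 (ler_norm_sum_diag_rowsum A B).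
have D2_le : `|D2 / N| <= a * b.
  by rewrite [a * b]mulrC; apply: ler_norm_div N_gt0 (ler_norm_sum_diag_rowsum B A).
have trA_le := ler_norm_div N_gt0 (ler_norm_mxtrace A).
have trB_le := ler_norm_div N_gt0 (ler_norm_mxtrace B).
have S_le : `|S / N / N| <= a * b.
  exact/(ler_norm_divN ab_ge0)/ler_norm_div/ler_norm_sum_rowsum_mul.
have sAsB_le : `|mxsum A / N * (mxsum B / N) / N| <= a * b.
  exact/(ler_norm_divN ab_ge0)/ler_normM_le/ler_norm_mxsum_div/ler_norm_mxsum_div.
have sum_le := ler_normD_le (ler_normM_le (ler_norm_mxsum_div B) trA_le)
                            (ler_normM_le (ler_norm_mxsum_div A) trB_le).
apply: le_trans (ler_normB_le (ler_normD_le
  (ler_normB_le sum_le (ler_normM_le (const_le 2 _) (ler_normD_le D1_le D2_le)))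
  (ler_normM_le (const_le 4 _) S_le)) (ler_normM_le (const_le 3 _) sAsB_le)) _ => //.
by have := ab_ge0; lra.
Qed.

Lemma ler_norm_mxtrace_dcenter_mul_sub :
  `|\tr (dcenter A) * \tr (dcenter B) - \tr A * \tr B| <= N * (3 * (a * b)).
Proof.
rewrite !mxtrace_dcenter //.
have -> : (\tr A - mxsum A / N) * (\tr B - mxsum B / N) - \tr A * \tr B =
          mxsum A / N * (mxsum B / N) - (\tr A * (mxsum B / N) + mxsum A / N * \tr B) by ring.
apply: le_trans (ler_normB_le
  (ler_normM_le (ler_norm_mxsum_div A) (ler_norm_mxsum_div B))
  (ler_normD_le (ler_normM_le (ler_norm_mxtrace A) (ler_norm_mxsum_div B))
                (ler_normM_le (ler_norm_mxsum_div A) (ler_norm_mxtrace B)))) _.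
by have := N_ge1; have := ab_ge0; nra.
Qed.

(* For n < 4 the divisions by n - 2 and n - 3 hidden in [kap22] and [kap4] are
   junk, and a crude bound replaces the asymptotic argument. *)
Lemma ler_norm_cov_sub_target_small : (n < 4)%N ->
  `|Covperm (fun p => qform A (svec p)) (fun p => qform B (svec p)) - cov_target|
    <= 30 * (a * b).
Proof.
move=> n_lt4; have N_le3 : N <= 3 by rewrite (ler_nat R n 3) -ltnS.
have qA_le p := ler_norm_qform_svec A p n_ge2.
have qB_le p := ler_norm_qform_svec B p n_ge2.
have mean_le := ler_normM_le (ler_norm_Eperm qA_le) (ler_norm_Eperm qB_le).
have mul_le := ler_norm_Eperm (fun p => ler_normM_le (qA_le p) (qB_le p)).
have tr_le : `|4 / (5 * N) * \tr A * \tr B| <= 4 / 5 * (N * (a * b)).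
  have c_le : `|4 / (5 * N)| <= 4 / (5 * N) by rewrite ger0_norm // divr_ge0 // mulr_ge0 // ltW.
  rewrite -mulrA; apply: le_trans (ler_normM_le c_le (ler_normM_le (ler_norm_mxtrace A)
                                                           (ler_norm_mxtrace B))) _.
  by rewrite [leRHS](_ : _ = 4 / (5 * N) * (N * a * (N * b))) //; field.
have X_le : `|2 * \tr (A *m B)| <= 2 * (N * (a * b)).
  by rewrite normrM ger0_norm // ler_pM2l // -{1}symB ler_norm_mxtrace_mul_trmx.
have H_le : `|6 / 5 * \tr (hadamard A B)| <= 6 / 5 * (N * (a * b)).
  rewrite mxtrace_hadamard; apply: ler_normM_le (ler_norm_sum_diag_mul A B).
  by rewrite ger0_norm // divr_ge0.
apply: le_trans (ler_normB_le (ler_normB_le mul_le mean_le)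
  (ler_normB_le (ler_normB_le X_le H_le) tr_le)) _.
have NN_le : N * N * (a * b) <= 9 * (a * b).
  by apply: ler_wpM2r => //; have := N_ge1; nra.
have N_le : N * (a * b) <= 3 * (a * b) by apply: ler_wpM2r.
by lra.
Qed.

Lemma Covperm_sub_cov_target :
  Covperm (fun p => qform A (svec p)) (fun p => qform B (svec p)) - cov_target =
  (kap22 R n - (N / (N - 1)) ^+ 2 + 4 / (5 * N)) * (\tr (dcenter A) * \tr (dcenter B))
  + 2 * ((kap22 R n - 1) * \tr (dcenter A *m dcenter B))
  + (kap4 R n + 6 / 5) * \sum_i dcenter A i i * dcenter B i i
  + 2 * (\tr (dcenter A *m dcenter B) - \tr (A *m B))
  - 6 / 5 * (\sum_i dcenter A i i * dcenter B i i - \sum_i A i i * B i i)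
  - 4 / (5 * N) * (\tr (dcenter A) * \tr (dcenter B) - \tr A * \tr B).
Proof. by rewrite /cov_target mxtrace_hadamard Covperm_qform //; ring. Qed.

Lemma ler_norm_cov_sub_target_large : (4 <= n)%N ->
  `|Covperm (fun p => qform A (svec p)) (fun p => qform B (svec p)) - cov_target|
    <= 82 * (a * b).
Proof.
move=> n_ge4; have N_ge4 : 4 <= N by rewrite (ler_nat R 4).
rewrite Covperm_sub_cov_target.
set tA := \tr (dcenter A); set tB := \tr (dcenter B).
set X' := \tr (dcenter A *m dcenter B); set H' := \sum_i dcenter A i i * dcenter B i i.
set X := \tr (A *m B); set H := \sum_i A i i * B i i.
have X_le : `|X| <= N * (a * b) by rewrite /X -{1}symB ler_norm_mxtrace_mul_trmx.
have dX_le : `|X' - X| <= 3 * (a * b) := ler_norm_mxtrace_mul_dcenter_sub.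
have dH_le : `|H' - H| <= 13 * (a * b) := ler_norm_sum_diag_dcenter_sub.
have X'_le : `|X'| <= N * (2 * (a * b)).
  rewrite -(subrK X X'); apply: le_trans (ler_normD_le dX_le X_le) _.
  by have := ab_ge0; nra.
have H'_le : `|H'| <= N * (5 * (a * b)).
  rewrite -(subrK H H'); apply: le_trans (ler_normD_le dH_le (ler_norm_sum_diag_mul A B)) _.
  by have := ab_ge0; nra.
have tt_le : `|tA * tB| <= N ^+ 2 * (4 * (a * b)).
  have := ler_normM_le (ler_norm_mxtrace_dcenter A) (ler_norm_mxtrace_dcenter B).
  by congr (_ <= _); ring.
have c_le : `|4 / (5 * N)| <= 4 / 5 / N.
  rewrite -mulrA -invfM ger0_norm //.
  by rewrite divr_ge0 // mulr_ge0 // ltW.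
have two : `|2 : R| <= 2 by rewrite ger0_norm.
have six_fifth : `|6 / 5 : R| <= 6 / 5 by rewrite ger0_norm // divr_ge0.
have t1 := ler_norm_mul_scaled (exprn_gt0 2 N_gt0) (ler_norm_kap22_mean_defect R n_ge4) tt_le.
have t2 := ler_normM_le two (ler_norm_mul_scaled N_gt0 (ler_norm_kap22_sub1 R n_ge4) X'_le).
have t3 := ler_norm_mul_scaled N_gt0 (ler_norm_kap4_add R n_ge4) H'_le.
have t6 := ler_norm_mul_scaled N_gt0 c_le ler_norm_mxtrace_dcenter_mul_sub.
apply: le_trans (ler_normB_le (ler_normB_le (ler_normD_le (ler_normD_le (ler_normD_le
  t1 t2) t3) (ler_normM_le two dX_le)) (ler_normM_le six_fifth dH_le)) t6) _.
by have := ab_ge0; lra.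
Qed.

End CovarianceBound.

Unset Implicit Arguments.

Theorem lemma5 (R : realType) :
  (forall (n : nat), (2 <= n)%N -> forall A : 'M[R]_n, A^T = A ->
     Eperm (fun p => qform A (svec p)) = \tr (Sigma R n *m A)) /\
  (exists C : R, forall (n : nat), (2 <= n)%N ->
     forall A B : 'M[R]_n, A^T = A -> B^T = B ->
     `| Covperm (fun p => qform A (svec p)) (fun p => qform B (svec p))
        - (2 * \tr (A *m B) - 6 / 5 * \tr (hadamard A B)
           - 4 / (5 * n%:R) * \tr A * \tr B) |
       <= C * specnorm A * specnorm B).
Proof.
split=> [n n_ge2 A _|]; first exact: Eperm_qform_Sigma.
exists 100 => n n_ge2 A B symA symB.
have ab_ge0 : 0 <= specnorm A * specnorm B by rewrite mulr_ge0 ?specnorm_ge0.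
have [n_ge4|n_lt4] := leqP 4 n.
  by apply: le_trans (ler_norm_cov_sub_target_large n_ge2 symA symB n_ge4) _; lra.
by apply: le_trans (ler_norm_cov_sub_target_small A n_ge2 symB n_lt4) _; lra.
Qed.
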